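(* For every $n\geq1$, $A_n(A_n^{n+1}-2A_n^n-2J_n)=0$.
   Context: For $\kappa\in(0,1/2)$, the paired tent map $T_\kappa:[-1,1]\to[-1,1]$ is $T_\kappa(x)=2(1+\kappa)(x+1)-1$ for $x\in[-1,-1/2]$, $T_\kappa(x)=-2(1+\kappa)x-1$ for $x\in[-1/2,0)$, $T_\kappa(0)=0$, $T_\kappa(x)=-2(1+\kappa)x+1$ for $x\in(0,1/2]$, $T_\kappa(x)=2(1+\kappa)(x-1)+1$ for $x\in[1/2,1]$. For $n\geq1$, $\kappa_n$ is the unique solution in $(0,1/2)$ of $(2+2\kappa)^n\kappa=1$, and $T_n=T_{\kappa_n}$. Let $r_0<\dots<r_{2n+4}$ enumerate increasingly the $2n+5$ distinct points of $\{-1,-1/2,0,1/2,1\}\cup\{T_n^i(\pm\kappa_n):0\le i\le n-1\}$ and $R_i=(r_{i-1},r_i)$. $A_n$ is the $(2n+4)\times(2n+4)$ matrix with $a_{ij}=1$ if $R_i\subset T_n(R_j)$ and $0$ otherwise. With $e_i$ the standard basis of $\mathbb C^{2n+4}$, $J_n$ is the permutation matrix with $J_ne_i=e_{2n+5-i}$. *)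

From HB Require Import structures.
From mathcomp Require Import all_boot all_order all_algebra.
From mathcomp Require Import boolp classical_sets reals set_interval.
Set Implicit Arguments. Unset Strict Implicit. Unset Printing Implicit Defensive.
Import Order.TTheory GRing.Theory Num.Theory.
Local Open Scope ring_scope.
Local Open Scope classical_set_scope.

Section PairedTent.
Variable R : realType.

(* the paired tent map T_kappa on [-1,1] (extended arbitrarily outside) *)
Definition tent (k : R) (x : R) : R :=
  if x <= - (1/2) then 2 * (1 + k) * (x + 1) - 1
  else if x < 0 then - (2 * (1 + k) * x) - 1
  else if x == 0 then 0
  else if x <= 1/2 then - (2 * (1 + k) * x) + 1
  else 2 * (1 + k) * (x - 1) + 1.

Definition kappa (n : nat) : R :=
  xget 0 [set k : R | 0 < k < 1/2 /\ (2 + 2 * k) ^+ n * k = 1].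

Definition Tn (n : nat) : R -> R := tent (kappa n).

Definition markov_pts (n : nat) : seq R :=
  [:: -1; - (1/2); 0; 1/2; 1]
  ++ [seq iter i (Tn n) (kappa n) | i <- iota 0 n]
  ++ [seq iter i (Tn n) (- kappa n) | i <- iota 0 n].

Definition rpts (n : nat) : seq R := sort <=%R (undup (markov_pts n)).
Definition r (n i : nat) : R := nth 0 (rpts n) i.

(* R_i = (r_{i-1}, r_i), i = 1..2n+4; 0-based index k stands for R_{k+1} *)
Definition Rint (n : nat) (k : nat) : set R := `](r n k), (r n k.+1)[.

Definition An (n : nat) : 'M[int]_(2 * n + 4) :=
  \matrix_(i, j) ((asbool (Rint n i `<=` Tn n @` Rint n j)) : nat)%:R.

End PairedTent.

(* J_n e_i = e_{2n+5-i}; 0-based: J k l = 1 iff k + l = 2n+3 *)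
Definition Jn (n : nat) : 'M[int]_(2 * n + 4) :=
  \matrix_(i, j) ((i + j == 2 * n + 3)%N : nat)%:R.

From Pilot Require Import Defs.
From HB Require Import structures.
From mathcomp Require Import all_boot all_order all_algebra.
From mathcomp Require Import boolp classical_sets reals set_interval.
From mathcomp Require Import zify lra ring.
Set Implicit Arguments. Unset Strict Implicit. Unset Printing Implicit Defensive.
Import Order.TTheory GRing.Theory Num.Theory.
Local Open Scope ring_scope.
Local Open Scope classical_set_scope.

(* The division points are explicit.  With c = 2 + 2 kappa_n the left branch of T_n gives
   T_n^i(-kappa_n) = c^i kappa_n - 1 < -1/2 for 0 < i < n, and c^n kappa_n = 1 sends the
   orbit to the fixed point 0.  Hence r_i = c^i kappa_n - 1 for 0 < i < n, r_n = -1/2,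
   r_(n+1) = -kappa_n, r_(n+2) = 0 and r_(2n+4-i) = -r_i.  As T_n is affine on every R_j,
   T_n(R_j) is again a union of consecutive intervals, so every column of A_n is the indicator
   of an interval of indices, and the oddness of T_n makes A_n commute with J_n.
   The matrix D = A_n (A_n^(n+1) - 2 A_n^n - 2 J_n) then commutes with A_n and J_n, so the set
   of vectors killed by D is stable under both.  Following the column of the leftmost interval,
   which after n steps of A_n has become twice the indicator of the intervals left of kappa_n,
   one checks directly that D kills three columns; the stability under A_n and J_n gives all
   the others when n >= 3.
   For n = 1, 2 the columns are checked by computation. *)

Section IntervalColumns.
Variable N : nat.

Definition itv_col (lo hi : nat) : 'cV[int]_N := \col_i ((lo <= i < hi)%N : nat)%:R.

Definition itv_mx (lo hi : nat -> nat) : 'M[int]_N :=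
  \matrix_(i, j) ((lo j <= i < hi j)%N : nat)%:R.

Lemma itv_col_cat a b c : (a <= b <= c)%N -> itv_col a c = itv_col a b + itv_col b c.
Proof. by move=> abc; apply/matrixP => i z; rewrite !mxE; lia. Qed.

Lemma itv_col1 j (ltjN : (j < N)%N) : itv_col j j.+1 = delta_mx (Ordinal ltjN) 0.
Proof.
apply/matrixP => i z; rewrite !mxE [z]ord1 eqxx andbT.
have -> : (j <= i < j.+1)%N = (i == Ordinal ltjN).
  by apply/idP/eqP => [ji|->] /=; [apply/val_inj => /=; lia | rewrite leqnn ltnSn].
by case: eqP.
Qed.

Lemma itv_mx_col lo hi j j' : (j < N)%N -> j' = j.+1 ->
  itv_mx lo hi *m itv_col j j' = itv_col (lo j) (hi j).
Proof.
by move=> ltjN ->; rewrite (itv_col1 ltjN) -colE; apply/matrixP => i z; rewrite !mxE.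
Qed.

End IntervalColumns.

Arguments itv_col {N}.
Arguments itv_mx {N}.

Section MatrixPowers.
Variables (R : pzRingType) (N p : nat) (A : 'M[R]_N).

Lemma mulmxXS m (v : 'M[R]_(N, p)) : A ^+ m.+1 *m v = A *m (A ^+ m *m v).
Proof. by rewrite exprS -mulmxE mulmxA. Qed.

Lemma mulmxXSr m (v : 'M[R]_(N, p)) : A ^+ m.+1 *m v = A ^+ m *m (A *m v).
Proof. by rewrite exprSr -mulmxE mulmxA. Qed.

Lemma mulmxX_comm (B : 'M[R]_N) m (v : 'M[R]_(N, p)) :
  A *m B = B *m A -> A ^+ m *m (B *m v) = B *m (A ^+ m *m v).
Proof.
by move=> AB; rewrite !mulmxA; congr (_ *m v); apply: commr_sym; apply/commrX/commr_sym.
Qed.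

End MatrixPowers.

Section Reversal.
Variable n : nat.
Local Notation N := (2 * n + 4)%N.

Lemma mulJmx m (X : 'M[int]_(N, m)) i k : (Jn n *m X) i k = X (rev_ord i) k.
Proof.
rewrite mxE (bigD1 (rev_ord i)) //= big1 ?addr0 => [|l /eqP nl]; rewrite mxE /=.
  by rewrite (_ : (_ == _) = true) ?mul1r //; apply/eqP; have := ltn_ord i; lia.
by rewrite (_ : (_ == _) = false) ?mul0r //; apply/eqP => il; apply: nl; apply/val_inj => /=; lia.
Qed.

Lemma mulmxJ m (X : 'M[int]_(m, N)) i k : (X *m Jn n) i k = X i (rev_ord k).
Proof.
rewrite mxE (bigD1 (rev_ord k)) //= big1 ?addr0 => [|l /eqP nl]; rewrite mxE /=.
  by rewrite (_ : (_ == _) = true) ?mulr1 //; apply/eqP; have := ltn_ord k; lia.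
by rewrite (_ : (_ == _) = false) ?mulr0 //; apply/eqP => il; apply: nl; apply/val_inj => /=; lia.
Qed.

Lemma mulJ_itv_col a b : Jn n *m itv_col a b = itv_col (N - b) (N - a).
Proof. by apply/matrixP => i z; rewrite mulJmx !mxE /=; have := ltn_ord i; lia. Qed.

End Reversal.

(* [orbit_idx n i] is the index of c^i kappa_n - 1 (= 0 = r_(n+2) when i = n),
   [tent_idx n i] that of T_n(r_i) for i <= n, and T_n(R_(j+1)) is the union of the intervals
   R_(i+1) with img_lo n j <= i < img_hi n j; the right half is obtained by symmetry. *)
Definition orbit_idx n i := if (i < n)%N then i else n.+2.

Definition tent_idx n i :=
  if i == 0%N then 0%N else if (i < n)%N then orbit_idx n i.+1 else n.+3.

Definition lo_left n j :=
  if (j < n)%N then tent_idx n j else if j == n then orbit_idx n 1 else 0%N.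

Definition hi_left n j :=
  if (j < n)%N then tent_idx n j.+1 else if j == n then n.+3 else orbit_idx n 1.

Definition img_lo n j :=
  if (j <= n.+1)%N then lo_left n j else (2 * n + 4 - hi_left n (2 * n + 3 - j))%N.

Definition img_hi n j :=
  if (j <= n.+1)%N then hi_left n j else (2 * n + 4 - lo_left n (2 * n + 3 - j))%N.

Definition tent_mx n : 'M[int]_(2 * n + 4) := itv_mx (img_lo n) (img_hi n).

Definition tent_defect n : 'M[int]_(2 * n + 4) :=
  tent_mx n *m (tent_mx n ^+ n.+1 - 2%:R *: tent_mx n ^+ n - 2%:R *: Jn n).

Ltac unfold_img := rewrite /img_lo /img_hi /lo_left /hi_left /tent_idx /orbit_idx.

Lemma img_bounds n j : (j < 2 * n + 4)%N ->
  (img_lo n j <= 2 * n + 4)%N /\ (img_hi n j <= 2 * n + 4)%N.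
Proof. by move=> ltjN; unfold_img; split; repeat case: ifP => ?; lia. Qed.

Section TentMatrix.
Variable n : nat.
Local Notation N := (2 * n + 4)%N.
Local Notation A := (tent_mx n).
Local Notation J := (Jn n).
Local Notation ind a b := (@itv_col N a%N b%N).
Local Notation M := (tent_defect n).

Lemma tent_mxJ : A *m J = J *m A.
Proof.
apply/matrixP => i k; rewrite mulJmx mulmxJ !mxE /=.
have := ltn_ord i; have := ltn_ord k => ltk lti.
congr ((nat_of_bool _)%:R); rewrite /img_lo /img_hi.
rewrite (_ : N - k.+1 = 2 * n + 3 - k)%N; last lia.
rewrite (_ : 2 * n + 3 - (2 * n + 3 - k) = k)%N; last lia.
by case: ifP; case: ifP => ? ?; lia.
Qed.

Lemma tent_mx_col j j' lo hi : (j < N)%N -> j' = j.+1 ->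
  img_lo n j = lo -> img_hi n j = hi -> A *m ind j j' = ind lo hi.
Proof. by move=> ltjN jj' <- <-; apply: itv_mx_col. Qed.

Lemma tent_defect_comm (B : 'M[int]_N) :
  A *m B = B *m A -> J *m B = B *m J -> M *m B = B *m M.
Proof.
move=> AB JB; have BA := commr_sym AB; have BJ := commr_sym JB.
rewrite /tent_defect !mulmxE !scaler_nat; apply: commr_sym.
apply: commrM BA (commrB (commrB (commrX _ BA) (commrMn _ (commrX _ BA))) (commrMn _ BJ)).
Qed.

Lemma mulmx_tent_defect (v : 'cV[int]_N) :
  M *m v = A ^+ n.+2 *m v - 2%:R *: (A ^+ n.+1 *m v) - 2%:R *: (J *m (A *m v)).
Proof.
rewrite /tent_defect -mulmxA !mulmxBl !mulmxBr -!scalemxAl -!scalemxAr -!mulmxA -!mulmxXS.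
by rewrite !mulmxA tent_mxJ.
Qed.

Lemma tent_defect_eq0_cols : (forall j, (j < N)%N -> M *m ind j j.+1 = 0) -> M = 0.
Proof.
move=> Mcol; apply/matrixP => i j.
have /matrixP/(_ i 0) := Mcol j (ltn_ord j).
rewrite (itv_col1 (ltn_ord j)) (_ : Ordinal _ = j) -?colE ?mxE //; exact: val_inj.
Qed.

Lemma tent_defect_mulA (v : 'cV[int]_N) : M *m (A *m v) = A *m (M *m v).
Proof. by rewrite mulmxA tent_defect_comm ?mulmxA //; exact/esym/tent_mxJ. Qed.

Lemma tent_defect_col_mirror j : M *m ind j j.+1 = 0 -> M *m ind (N - j.+1) (N - j) = 0.
Proof.
move=> Mj; rewrite -mulJ_itv_col mulmxA tent_defect_comm ?tent_mxJ //.
by rewrite -mulmxA Mj mulmx0.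
Qed.

End TentMatrix.

Section LargePeriod.
Variable n : nat.
Hypothesis n_ge3 : (3 <= n)%N.
Local Notation N := (2 * n + 4)%N.
Local Notation A := (tent_mx n).
Local Notation J := (Jn n).
Local Notation ind a b := (@itv_col N a%N b%N).
Local Notation M := (tent_defect n).

Ltac tent_col := apply: tent_mx_col; unfold_img; repeat case: ifP => ?; lia.
(* lia is much faster on the row index once it is generalised to a bare nat. *)
Ltac entrywise :=
  apply/matrixP => ? ?; rewrite !mxE;
  match goal with |- context [nat_of_ord ?i] => move: (nat_of_ord i) (ltn_ord i) => ? ? end;
  lia.

Lemma tent_col0 : A *m ind 0 1 = ind 0 2. Proof. tent_col. Qed.
Lemma tent_col_shift i : (1 <= i <= n - 3)%N -> A *m ind i i.+1 = ind i.+1 i.+2.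
Proof. move=> ?; tent_col. Qed.
Lemma tent_col_nm2 : A *m ind (n - 2) (n - 1) = ind (n - 1) n.+2. Proof. tent_col. Qed.
Lemma tent_col_nm1 : A *m ind (n - 1) n = ind n.+2 n.+3. Proof. tent_col. Qed.
Lemma tent_col_n : A *m ind n n.+1 = ind 1 n.+3. Proof. tent_col. Qed.
Lemma tent_col_nS : A *m ind n.+1 n.+2 = ind 0 1. Proof. tent_col. Qed.
Lemma tent_col_nS2 : A *m ind n.+2 n.+3 = ind (N - 1) N. Proof. tent_col. Qed.
Lemma tent_col_last : A *m ind (N - 1) N = ind (N - 2) N. Proof. tent_col. Qed.

Lemma tent_prefix_small m : (1 <= m <= n - 2)%N -> A *m ind 0 m = ind 0 m.+1.
Proof.
elim: m => [//|[_ _|m IH ltm]]; first exact: tent_col0.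
rewrite (@itv_col_cat _ 0 m.+1); last lia.
rewrite mulmxDr IH ?tent_col_shift; [|lia..].
by rewrite -itv_col_cat //; lia.
Qed.

Lemma tent_prefix_nm1 : A *m ind 0 (n - 1) = ind 0 n.+2.
Proof.
rewrite (@itv_col_cat _ 0 (n - 2)); last lia.
rewrite mulmxDr tent_prefix_small ?tent_col_nm2; [|lia..].
by rewrite (_ : (n - 2).+1 = n - 1)%N -?itv_col_cat //; lia.
Qed.

Lemma tent_prefix_nS2 : A *m ind 0 n.+2 = 2%:R *: ind 0 n.+3.
Proof.
rewrite (@itv_col_cat _ 0 (n - 1)) 1?(@itv_col_cat _ (n - 1) n) 1?(@itv_col_cat _ n n.+1);
  [|lia..].
by rewrite !mulmxDr tent_prefix_nm1 tent_col_nm1 tent_col_n tent_col_nS; entrywise.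
Qed.

Lemma tent_prefix_nS3 : A *m ind 0 n.+3 = 2%:R *: ind 0 n.+3 + ind (N - 1) N.
Proof.
by rewrite [in A *m _](@itv_col_cat _ 0 n.+2) ?mulmxDr ?tent_prefix_nS2 ?tent_col_nS2 //; lia.
Qed.

Lemma tent_orbit_small m : (m <= n - 2)%N -> A ^+ m *m ind 0 1 = ind 0 m.+1.
Proof.
elim: m => [|m IH] ltm; first by rewrite mul1mx.
by rewrite mulmxXS IH ?tent_prefix_small //; lia.
Qed.

Lemma tent_orbit_nm1 : A ^+ (n - 1) *m ind 0 1 = ind 0 n.+2.
Proof.
have -> : (n - 1 = (n - 2).+1)%N by lia.
by rewrite mulmxXS tent_orbit_small // -tent_prefix_nm1; congr (_ *m itv_col _ _); lia.
Qed.

Lemma tent_orbit_n : A ^+ n *m ind 0 1 = 2%:R *: ind 0 n.+3.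
Proof.
have -> : A ^+ n = A ^+ (n - 1).+1 by congr (_ ^+ _); lia.
by rewrite mulmxXS tent_orbit_nm1 tent_prefix_nS2.
Qed.

Lemma tent_orbit_nS : A ^+ n.+1 *m ind 0 1 = 2%:R *: (2%:R *: ind 0 n.+3 + ind (N - 1) N).
Proof. by rewrite mulmxXS tent_orbit_n -scalemxAr tent_prefix_nS3. Qed.

Lemma tent_defect_col0 : M *m ind 0 1 = 0.
Proof.
rewrite mulmx_tent_defect mulmxXS tent_orbit_nS tent_col0 mulJ_itv_col.
rewrite -!scalemxAr mulmxDr -scalemxAr tent_prefix_nS3 tent_col_last; entrywise.
Qed.

Lemma tent_defect_colnS : M *m ind n.+1 n.+2 = 0.
Proof.
rewrite mulmx_tent_defect [A ^+ n.+2 *m _]mulmxXSr [A ^+ n.+1 *m _]mulmxXSr tent_col_nS.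
by rewrite tent_orbit_nS tent_orbit_n mulJ_itv_col; entrywise.
Qed.

Lemma tent_defect_colnm1 : M *m ind (n - 1) n = 0.
Proof.
have mirror : ind n.+2 n.+3 = J *m ind n.+1 n.+2 by rewrite mulJ_itv_col; congr itv_col; lia.
rewrite mulmx_tent_defect [A ^+ n.+2 *m _]mulmxXSr [A ^+ n.+1 *m _]mulmxXSr tent_col_nm1 mirror.
have orbit_col_nS : A ^+ n *m ind n.+1 n.+2 = ind 0 n.+2.
  have -> : A ^+ n = A ^+ (n - 1).+1 by congr (_ ^+ _); lia.
  by rewrite mulmxXSr tent_col_nS tent_orbit_nm1.
rewrite !mulmxX_comm ?tent_mxJ // [A ^+ n.+1 *m _]mulmxXSr tent_col_nS tent_orbit_n orbit_col_nS.
by rewrite -scalemxAr !mulJ_itv_col; entrywise.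
Qed.

Lemma tent_defect_col_mid i : (1 <= i <= n - 2)%N -> M *m ind i i.+1 = 0.
Proof.
elim: i => [//|[_ _|i IH lti]].
  have -> : ind 1 2 = A *m ind 0 1 - ind 0 1 by rewrite tent_col0; entrywise.
  by rewrite mulmxBr tent_defect_mulA tent_defect_col0 mulmx0 subr0.
rewrite -tent_col_shift; last lia.
by rewrite tent_defect_mulA IH ?mulmx0 //; lia.
Qed.

Lemma tent_defect_col_n : M *m ind n n.+1 = 0.
Proof.
have -> : ind n n.+1 = A *m ind (n - 2) (n - 1) - ind (n - 1) n - ind n.+1 n.+2.
  by rewrite tent_col_nm2; entrywise.
have M_nm2 : M *m ind (n - 2) (n - 1) = 0.
  by rewrite (_ : n - 1 = (n - 2).+1)%N ?tent_defect_col_mid //; lia.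
rewrite !mulmxBr tent_defect_mulA M_nm2 tent_defect_colnm1 tent_defect_colnS.
by rewrite mulmx0 !subr0.
Qed.

Lemma tent_defect_cols_left j : (j <= n.+1)%N -> M *m ind j j.+1 = 0.
Proof.
move=> lejn; have [->|j_gt0] := posnP j; first exact: tent_defect_col0.
have [lejn2|ltjn2] := leqP j (n - 2)%N; first by apply: tent_defect_col_mid; lia.
have [->|?] := eqVneq j (n - 1)%N.
  by rewrite (_ : (n - 1).+1 = n)%N; [exact: tent_defect_colnm1 | lia].
have [->|?] := eqVneq j n; first exact: tent_defect_col_n.
by rewrite (_ : j = n.+1); [exact: tent_defect_colnS | lia].
Qed.

Lemma tent_defect_cols_large j : (j < N)%N -> M *m ind j j.+1 = 0.
Proof.
move=> ltjN; have [|ltnj] := leqP j n.+1; first exact: tent_defect_cols_left.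
have := tent_defect_col_mirror (@tent_defect_cols_left (N - j.+1)%N (ltac:(lia))).
rewrite (_ : N - (N - j.+1).+1 = j)%N; last lia.
by rewrite (_ : N - (N - j.+1) = j.+1)%N; last lia.
Qed.

End LargePeriod.

Section SmallPeriod.
Variable n : nat.
Local Notation N := (2 * n + 4)%N.
Local Notation A := (tent_mx n).
Local Notation J := (Jn n).
Local Notation M := (tent_defect n).

Definition col_of (f : nat -> int) : 'cV[int]_N := \col_i f i.

(* A foldr rather than a bigop, so that vm_compute can evaluate it. *)
Definition tent_act (f : nat -> int) (i : nat) : int :=
  foldr (fun j s => (if (img_lo n j <= i < img_hi n j)%N then f j else 0) + s) 0 (iota 0 N).

Definition tent_defect_act (f : nat -> int) (i : nat) : int :=
  iter n.+2 tent_act f i - 2%:R * iter n.+1 tent_act f i - 2%:R * tent_act f (2 * n + 3 - i).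

Definition tent_defect_free : bool :=
  all (fun j => all (fun i => tent_defect_act (fun k => (k == j : nat)%:R) i == 0) (iota 0 N))
    (iota 0 N).

Lemma tent_mx_col_of f : A *m col_of f = col_of (tent_act f).
Proof.
apply/matrixP => i z; set F := fun j => if (img_lo n j <= i < img_hi n j)%N then f j else 0.
rewrite !mxE (eq_bigr (fun j : 'I_N => F j)) => [|j _]; last first.
  by rewrite !mxE /F; case: ifP; rewrite ?mul1r ?mul0r.
rewrite -(big_mkord xpredT F) /index_iota subn0 /tent_act -/F.
by elim: (iota 0 N) => [|j s IH]; rewrite ?big_nil ?big_cons //= IH.
Qed.

Lemma mulJ_col_of f : J *m col_of f = col_of (fun i => f (2 * n + 3 - i)%N).
Proof.
apply/matrixP => i z; rewrite mulJmx !mxE /=; congr f; have := ltn_ord i; lia.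
Qed.

Lemma tent_defect_col_of f : M *m col_of f = col_of (tent_defect_act f).
Proof.
have iter_col_of m : A ^+ m *m col_of f = col_of (iter m tent_act f).
  by elim: m => [|m IH]; rewrite ?mul1mx // mulmxXS IH tent_mx_col_of.
rewrite mulmx_tent_defect !iter_col_of tent_mx_col_of mulJ_col_of.
by apply/matrixP => i z; rewrite !mxE.
Qed.

Lemma tent_defect_free_cols :
  tent_defect_free -> forall j, (j < N)%N -> M *m itv_col j j.+1 = 0.
Proof.
move=> /allP Mfree j ltjN.
have -> : itv_col j j.+1 = col_of (fun k => (k == j : nat)%:R).
  by apply/matrixP => i z; rewrite !mxE; congr ((nat_of_bool _)%:R); lia.
rewrite tent_defect_col_of; apply/matrixP => i z; rewrite !mxE.
by apply/eqP; apply: (allP (Mfree j _)); rewrite mem_iota //; have := ltn_ord i; lia.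
Qed.

End SmallPeriod.

Lemma tent_defect_free_small : tent_defect_free 1 && tent_defect_free 2.
Proof. by vm_compute. Qed.

Theorem tent_defect_eq0 n : (1 <= n)%N -> tent_defect n = 0.
Proof.
move=> n_gt0; apply: tent_defect_eq0_cols.
case: (leqP 3 n) => [|lt3n]; first exact: tent_defect_cols_large.
have /andP[free1 free2] := tent_defect_free_small.
by case: n n_gt0 lt3n => [|[|[|]]] //= _ _; apply: tent_defect_free_cols.
Qed.

Section OpenIntervals.
Variable R : realFieldType.
Implicit Types (a b s t u v : R) (f : R -> R).

Lemma image_affine_itv_gt0 f a b s t : 0 < s ->
  (forall x, a < x < b -> f x = s * x + t) -> f @` `]a, b[ = `](s * a + t), (s * b + t)[.
Proof.
move=> s_gt0 fE; apply/seteqP; split => [y [x + <-] | y].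
  by rewrite /= !in_itv /= => /andP[ax xb]; rewrite fE ?ax ?xb //; apply/andP; split; nra.
rewrite /= in_itv /= => /andP[ay yb].
have xab : a < (y - t) / s < b.
  by rewrite ltr_pdivlMr ?ltr_pdivrMr //; apply/andP; split; lra.
exists ((y - t) / s); first by rewrite /= in_itv.
by rewrite fE //; field; lra.
Qed.

Lemma image_affine_itv_lt0 f a b s t : s < 0 ->
  (forall x, a < x < b -> f x = s * x + t) -> f @` `]a, b[ = `](s * b + t), (s * a + t)[.
Proof.
move=> s_lt0 fE.
have -> : f @` `]a, b[ = (f \o -%R) @` `](- b), (- a)[.
  apply/seteqP; split => y [x + <-]; rewrite /= !in_itv /= => /andP[x1 x2].
    by exists (- x); rewrite /= ?opprK // in_itv /=; apply/andP; split; lra.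
  by exists (- x); rewrite // in_itv /=; apply/andP; split; lra.
rewrite (@image_affine_itv_gt0 _ _ _ (- s) t); first by rewrite !mulrNN.
  by rewrite oppr_gt0.
by move=> x /andP[x1 x2]; rewrite /= fE ?mulrN ?mulNr //; apply/andP; split; lra.
Qed.

Lemma image_itvN f a b u v : (forall x, f (- x) = - f x) ->
  f @` `]a, b[ = `]u, v[ -> f @` `](- b), (- a)[ = `](- v), (- u)[.
Proof.
move=> fN fab; apply/seteqP; split => [y [x + <-] | y].
  rewrite /= !in_itv /= => /andP[x1 x2].
  have : `]u, v[ (f (- x)).
    by rewrite -fab; exists (- x); rewrite // /= in_itv /=; apply/andP; split; lra.
  by rewrite fN /= !in_itv /= => /andP[y1 y2]; apply/andP; split; lra.
rewrite /= in_itv /= => /andP[y1 y2].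
have : `]u, v[ (- y) by rewrite /= in_itv /=; apply/andP; split; lra.
rewrite -fab => -[x]; rewrite /= in_itv /= => /andP[x1 x2] fx.
by exists (- x); rewrite ?fN ?fx ?opprK // /= in_itv /=; apply/andP; split; lra.
Qed.

Lemma chain_lt_mono (f : nat -> R) (N : nat) : (forall k, (k < N)%N -> f k < f k.+1) ->
  {in [pred k | (k <= N)%N] &, {mono f : k l / (k < l)%N >-> k < l}}.
Proof.
move=> f_step; apply/leW_mono_in/Order.NatMonotonyTheory.incn_inP => [k l + + m|k _].
  by rewrite !inE /= !ltEnat /=; lia.
by rewrite !inE; exact: f_step.
Qed.

Lemma itv_subset_consecutive (f : nat -> R) (N i lo hi : nat) :
  (forall k, (k < N)%N -> f k < f k.+1) -> (i < N)%N -> (lo <= N)%N -> (hi <= N)%N ->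
  (`](f i), (f i.+1)[ `<=` `](f lo), (f hi)[) <-> (lo <= i < hi)%N.
Proof.
move=> f_step ltiN leloN lehiN.
have fi := f_step i ltiN.
have lt_f k l : (k <= N)%N -> (l <= N)%N -> (f k < f l) = (k < l)%N.
  by move=> kN lN; apply: (chain_lt_mono f_step).
split => [sub | /andP[loi ihi] x].
  have /sub : `](f i), (f i.+1)[ ((f i + f i.+1) / 2).
    by rewrite /= in_itv /=; apply/andP; split; lra.
  rewrite /= in_itv /= => /andP[lo_mid mid_hi].
  apply/andP; split; first by rewrite -ltnS -lt_f //; lra.
  by rewrite -lt_f ?(ltnW ltiN) //; lra.
have f_le k l : (k <= l)%N -> (l <= N)%N -> f k <= f l.
  by rewrite leq_eqVlt => /orP[/eqP-> //|kl lN]; rewrite ltW // lt_f //; lia.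
rewrite /= !in_itv /= => /andP[x1 x2].
by have := f_le _ _ loi (ltnW ltiN); have := f_le _ _ ihi lehiN => ? ?; apply/andP; split; lra.
Qed.

End OpenIntervals.

Section TentBranches.
Variable R : realType.
Implicit Types (k x : R).

Lemma tent_left k x : x <= - (1/2) -> tent k x = 2 * (1 + k) * x + (2 * (1 + k) - 1).
Proof. by move=> x_le; rewrite /tent x_le; ring. Qed.

Lemma tent_midleft k x : - (1/2) <= x < 0 -> tent k x = - (2 * (1 + k) * x) - 1.
Proof.
move=> /andP[x_ge x_lt]; rewrite /tent x_lt; case: ifP => // x_le.
have -> : x = - (1/2) by lra.
lra.
Qed.

Lemma tent_midright k x : 0 < x <= 1/2 -> tent k x = - (2 * (1 + k) * x) + 1.
Proof.
move=> /andP[x_gt x_le]; rewrite /tent x_le gt_eqF //.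
by case: ifP => [?|_]; [lra | case: ifP => [?|_] //; lra].
Qed.

Lemma tent_right k x : 1/2 <= x -> tent k x = 2 * (1 + k) * x + (1 - 2 * (1 + k)).
Proof.
move=> x_ge; rewrite /tent gt_eqF; last lra.
case: ifP => [?|_]; first lra.
case: ifP => [?|_]; first lra.
case: ifP => [?|_]; last ring.
have -> : x = 1/2 by lra.
lra.
Qed.

Lemma tent0 k : tent k 0 = 0.
Proof. by rewrite /tent ltxx eqxx; case: ifP => //; lra. Qed.

Lemma tentN k x : tent k (- x) = - tent k x.
Proof.
have [x_lt|x_gt|->] := ltgtP x 0; last by rewrite oppr0 tent0 oppr0.
- have [x_le|x_gt'] := lerP x (- (1/2)).
    by rewrite tent_right ?tent_left; [ring | lra | lra].
  by rewrite tent_midright ?tent_midleft; [ring | apply/andP; split; lra..].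
- have [x_le|x_gt'] := lerP x (1/2).
    by rewrite tent_midleft ?tent_midright; [ring | apply/andP; split; lra..].
  by rewrite tent_left ?tent_right; [ring | lra | lra].
Qed.

Lemma iter_tentN k i x : iter i (tent k) (- x) = - iter i (tent k) x.
Proof. by elim: i => //= i ->; rewrite tentN. Qed.

End TentBranches.

Lemma kappa_spec (R : realType) n : (1 <= n)%N ->
  0 < kappa R n < 1/2 /\ (2 + 2 * kappa R n) ^+ n * kappa R n = 1.
Proof.
move=> n_gt0; suff kappa_ex : exists k : R, 0 < k < 1/2 /\ (2 + 2 * k) ^+ n * k = 1.
  exact: (xgetPex 0 kappa_ex).
pose p : {poly R} := (2%:P + 2%:P * 'X) ^+ n * 'X - 1.
have pE x : p.[x] = (2 + 2 * x) ^+ n * x - 1 by rewrite !hornerE.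
have three_le : (3 : R) <= 3 ^+ n by rewrite -[X in X <= _]expr1 ler_eXn2l //; lra.
have [x /andP[x_ge0 x_le] /rootP] : exists2 x, 0 <= x <= 1/2 & root p x.
  apply: poly_ivt; first lra.
  by rewrite !pE mulr0 (_ : 2 + 2 * (1/2) = 3 :> R); [lra | field].
rewrite pE => /eqP; rewrite subr_eq0 => /eqP px.
exists x; split => //; apply/andP; split.
  by rewrite lt_neqAle x_ge0 andbT; apply/eqP => x0; move: px; rewrite -x0 mulr0; lra.
rewrite lt_neqAle x_le andbT; apply/eqP => x_half; move: px.
by rewrite x_half (_ : 2 + 2 * (1/2) = 3 :> R); [lra | field].
Qed.

Section MarkovPartition.
Variables (R : realType) (n : nat).
Hypothesis n_gt0 : (1 <= n)%N.
Local Notation k := (kappa R n).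
Local Notation c := (2 * (1 + kappa R n)).
Local Notation N := (2 * n + 4)%N.
Local Notation T := (@Tn R n).

Lemma kappa_gt0 : 0 < k. Proof. by case: (kappa_spec R n_gt0) => /andP[]. Qed.
Lemma kappa_lt_half : k < 1/2. Proof. by case: (kappa_spec R n_gt0) => /andP[]. Qed.
Lemma slope_gt2 : 2 < c. Proof. by have := kappa_gt0; lra. Qed.

Lemma expslope_kappa : c ^+ n * k = 1.
Proof. by case: (kappa_spec R n_gt0) => _; rewrite (_ : c = 2 + 2 * k) //; ring. Qed.

Lemma expslope_kappa_lt i j : (i < j)%N -> c ^+ i * k < c ^+ j * k.
Proof. by move=> ij; rewrite ltr_pM2r ?kappa_gt0 // ltr_eXn2l //; have := slope_gt2; lra. Qed.

Lemma expslope_kappa_lt_half i : (i < n)%N -> c ^+ i * k < 1/2.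
Proof.
move=> ltin; have last_lt : c ^+ n.-1 * k < 1/2.
  have : c * (c ^+ n.-1 * k) = 1 by rewrite mulrA -exprS prednK // expslope_kappa.
  have : 0 < c ^+ n.-1 * k by rewrite mulr_gt0 ?exprn_gt0 ?kappa_gt0 //; have := slope_gt2; lra.
  by have := slope_gt2; nra.
have [->|ltin1] := eqVneq i n.-1; first exact: last_lt.
by have := @expslope_kappa_lt i n.-1 (ltac:(lia)); lra.
Qed.

Definition pt_left i : R :=
  if i == 0%N then -1 else if (i < n)%N then c ^+ i * k - 1
  else if i == n then - (1/2) else if i == n.+1 then - k else 0.

Definition pt i : R := if (i <= n.+2)%N then pt_left i else - pt_left (N - i)%N.

Lemma pt_left_step i : (i <= n.+1)%N -> pt_left i < pt_left i.+1.
Proof.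
move=> lein; have k_gt0 := kappa_gt0; have k_lt := kappa_lt_half; rewrite /pt_left /=.
have [->|i_gt0] := posnP i.
  case: ifP => [lt1n|ge1n]; last by rewrite ifT; [lra | apply/eqP; lia].
  by have := @expslope_kappa_lt 0 1 isT; rewrite expr0 mul1r; lra.
have [ltin1|] := ltnP i.+1 n.
  rewrite (_ : (i < n)%N = true); last lia.
  by have := @expslope_kappa_lt i i.+1 (ltnSn i); lra.
rewrite leq_eqVlt => /orP[/eqP ni1|ltni1].
  rewrite -ni1 eqxx leqnn.
  by have := @expslope_kappa_lt_half i (ltac:(lia)); lra.
rewrite (_ : (i < n)%N = false); last lia.
rewrite (_ : (i.+1 == n) = false); last lia.
have [->|neqin] := eqVneq i n; first by rewrite !eqxx; lra.
rewrite (_ : i = n.+1) ?eqxx; last lia.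
by rewrite (_ : (n.+2 == n.+1) = false); [lra | lia].
Qed.

Lemma pt_left_nS2 : pt_left n.+2 = 0.
Proof. by rewrite /pt_left !ifF //; lia. Qed.

Lemma pt_hi i : (n.+2 <= i)%N -> pt i = - pt_left (N - i)%N.
Proof.
rewrite /pt leq_eqVlt => /orP[/eqP <-|lt_i]; last by rewrite leqNgt lt_i.
by rewrite leqnn (_ : N - n.+2 = n.+2)%N ?pt_left_nS2 ?oppr0 //; lia.
Qed.

Lemma pt_step i : (i < N)%N -> pt i < pt i.+1.
Proof.
move=> ltiN; have [le_i|lt_i] := leqP i.+1 n.+2.
  by rewrite /pt le_i ltnW //; apply: pt_left_step; lia.
rewrite !pt_hi ?ltrN2; [|lia..].
by rewrite (_ : N - i = (N - i.+1).+1)%N; [apply: pt_left_step | ]; lia.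
Qed.

Lemma ptN i : (i <= N)%N -> pt (N - i)%N = - pt i.
Proof.
move=> leiN; have [le_i|lt_i] := leqP i n.+2.
  rewrite pt_hi; last lia.
  by rewrite (_ : N - (N - i) = i)%N /pt ?le_i //; lia.
rewrite [pt i]pt_hi; last lia.
by rewrite opprK /pt ifT //; lia.
Qed.

Ltac pt_cases := rewrite /pt /pt_left; repeat (case: ifP => ?; try (exfalso; lia)).

Lemma pt0 : pt 0 = -1. Proof. by []. Qed.

Lemma pt_orbit i : (0 < i < n)%N -> pt i = c ^+ i * k - 1.
Proof. by move=> ?; pt_cases. Qed.

Lemma pt_n : pt n = - (1/2).
Proof. by pt_cases. Qed.

Lemma pt_nS : pt n.+1 = - k.
Proof. by pt_cases. Qed.

Lemma pt_nS2 : pt n.+2 = 0.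
Proof. by rewrite /pt leqnn pt_left_nS2. Qed.

Lemma pt_nS3 : pt n.+3 = k.
Proof. by rewrite -(opprK k) -pt_nS -ptN; [congr pt | ]; lia. Qed.

Lemma pt_nS4 : pt n.+4 = 1/2.
Proof. by rewrite -(opprK (1/2)) -pt_n -ptN; [congr pt | ]; lia. Qed.

Lemma pt_top : pt N = 1.
Proof. by rewrite -(opprK 1) -pt0 -ptN ?subn0. Qed.

Lemma pt_orbit_idx i : (0 < i <= n)%N -> pt (orbit_idx n i) = c ^+ i * k - 1.
Proof.
rewrite /orbit_idx => lt_i; case: ifP => [ltin|ge_in]; first by apply: pt_orbit; lia.
by rewrite pt_nS2 (_ : i = n) ?expslope_kappa ?subrr //; lia.
Qed.

Lemma pt_tent_idx i : (i <= n)%N -> c * pt i + (c - 1) = pt (tent_idx n i).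
Proof.
rewrite /tent_idx => lein; case: ifP => [/eqP->|i_neq0]; first by rewrite pt0; ring.
case: ifP => [ltin|ge_in].
  by rewrite pt_orbit_idx ?pt_orbit ?exprS; [ring | lia | lia].
rewrite (_ : i = n) ?pt_n ?pt_nS3; last lia.
by have := kappa_gt0; lra.
Qed.

Lemma iter_Tn_negkappa i : (0 < i < n)%N -> iter i T (- k) = c ^+ i * k - 1.
Proof.
have k_gt0 := kappa_gt0; have k_lt := kappa_lt_half.
elim: i => [//|[_ _|i IH lt_i]]; first by rewrite /= /Tn tent_midleft ?expr1; [ring | lra].
rewrite iterS IH; last lia.
have := expslope_kappa_lt_half (ltac:(lia) : (i.+1 < n)%N) => small.
by rewrite /Tn tent_left; [rewrite !exprS; ring | lra].
Qed.

Lemma iter_Tn_kappa i : (0 < i < n)%N -> iter i T k = 1 - c ^+ i * k.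
Proof. by move=> lt_i; rewrite -[LHS]opprK -iter_tentN iter_Tn_negkappa // opprB. Qed.

Lemma mem_markov_pts x : (x \in markov_pts R n) = (x \in [seq pt i | i <- iota 0 N.+1]).
Proof.
set S := [seq pt i | i <- iota 0 N.+1].
have ptE i : (i <= N)%N -> pt i \in S by move=> leiN; apply: map_f; rewrite mem_iota; lia.
have ptS : x \in S -> exists2 i, (i <= N)%N & x = pt i.
  by move=> /mapP[i]; rewrite mem_iota => lt_i ->; exists i => //; lia.
clearbody S; apply/idP/idP.
  rewrite /markov_pts !mem_cat !inE => /orP[|/orP[]].
  - move=> /orP[/eqP->|/orP[/eqP->|/orP[/eqP->|/orP[/eqP->|/eqP->]]]].
    + by rewrite -pt0 ptE.
    + by rewrite -pt_n // ptE //; lia.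
    + by rewrite -pt_nS2 ptE //; lia.
    + by rewrite -pt_nS4 // ptE //; lia.
    + by rewrite -pt_top // ptE.
  - move=> /mapP[i]; rewrite mem_iota => lt_i ->.
    have [->|i_gt0] := posnP i; first by rewrite -pt_nS3 // ptE //; lia.
    have -> : iter i T k = pt (N - i) by rewrite ptN ?pt_orbit ?iter_Tn_kappa ?opprB //; lia.
    by rewrite ptE //; lia.
  - move=> /mapP[i]; rewrite mem_iota => lt_i ->.
    have [->|i_gt0] := posnP i; first by rewrite -pt_nS // ptE //; lia.
    by rewrite iter_Tn_negkappa -?pt_orbit ?ptE //; lia.
move=> /ptS[i leiN ->]; rewrite /markov_pts !mem_cat.
set K := [seq iter j T k | j <- iota 0 n]; set NK := [seq iter j T (- k) | j <- iota 0 n].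
have inK j : (j < n)%N -> iter j T k \in K by move=> ltjn; apply: map_f; rewrite mem_iota; lia.
have inNK j : (j < n)%N -> iter j T (- k) \in NK.
  by move=> ltjn; apply: map_f; rewrite mem_iota; lia.
clearbody K NK.
have [->|i_gt0] := posnP i; first by rewrite pt0 !inE eqxx.
have [ltin|] := ltnP i n; first by rewrite pt_orbit -?iter_Tn_negkappa ?inNK ?orbT //; lia.
rewrite leq_eqVlt => /orP[/eqP <-|]; first by rewrite pt_n !inE eqxx ?orbT.
rewrite leq_eqVlt => /orP[/eqP <-|]; first by rewrite pt_nS (inNK 0%N) ?orbT.
rewrite leq_eqVlt => /orP[/eqP <-|]; first by rewrite pt_nS2 !inE eqxx ?orbT.
rewrite leq_eqVlt => /orP[/eqP <-|]; first by rewrite pt_nS3 (inK 0%N) ?orbT.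
rewrite leq_eqVlt => /orP[/eqP <-|]; first by rewrite pt_nS4 !inE eqxx ?orbT.
move=> lt_i; have [->|ltiN] := eqVneq i N; first by rewrite pt_top !inE eqxx ?orbT.
have -> : i = (N - (N - i))%N by lia.
rewrite ptN ?pt_orbit ?opprB; [|lia..].
by rewrite -iter_Tn_kappa ?inK ?orbT //; lia.
Qed.

Lemma rpts_pt : rpts R n = [seq pt i | i <- iota 0 N.+1].
Proof.
apply: (irr_sorted_eq (leT := <%R)); [exact: lt_trans | by move=> x; rewrite ltxx | | |].
- by rewrite /rpts sort_lt_sorted undup_uniq.
- have incr a m : (a + m <= N)%N -> path (relpre pt <%R) a (iota a.+1 m).
    by elim: m a => [//|m IH] a le_am /=; rewrite pt_step ?IH //; lia.
  by rewrite sorted_map; apply: incr.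
- by move=> x; rewrite /rpts mem_sort mem_undup mem_markov_pts.
Qed.

Lemma r_pt i : (i <= N)%N -> r R n i = pt i.
Proof.
by move=> leiN; rewrite /r rpts_pt (nth_map 0%N) ?nth_iota ?size_iota //; lia.
Qed.

(* Unqualified, [Rint] is ssrint's predicate of integers. *)
Lemma Rint_pt j : (j < N)%N -> @Defs.Rint R n j = `](pt j), (pt j.+1)[.
Proof. by move=> ltjN; rewrite /Defs.Rint !r_pt //; lia. Qed.

Lemma pt_lt i j : (i <= N)%N -> (j <= N)%N -> (pt i < pt j) = (i < j)%N.
Proof.
move=> leiN lejN; apply: (chain_lt_mono (N := N)); rewrite ?inE //.
by move=> l ltlN; apply: pt_step.
Qed.

Lemma image_Rint_left j : (j <= n.+1)%N ->
  T @` @Defs.Rint R n j = `](pt (img_lo n j)), (pt (img_hi n j))[.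
Proof.
move=> lejn; rewrite Rint_pt; last lia.
have k_gt0 := kappa_gt0; have k_lt := kappa_lt_half; have c_gt2 := slope_gt2.
rewrite /img_lo /img_hi lejn /lo_left /hi_left.
have [ltjn|] := ltnP j n.
  have le_half : pt j.+1 <= - (1/2).
    rewrite -pt_n; have [->//|ne] := eqVneq j.+1 n.
    by rewrite ltW // pt_lt //; lia.
  rewrite (@image_affine_itv_gt0 _ _ _ _ c (c - 1)); last 2 first.
  - lra.
  - by move=> x /andP[_ x_lt]; rewrite /Tn tent_left; [ring | lra].
  by rewrite !pt_tent_idx //; lia.
have pt1 : pt (orbit_idx n 1) = c * k - 1 by rewrite pt_orbit_idx ?expr1.
rewrite leq_eqVlt => /orP[/eqP <-|ltnj].
  rewrite eqxx (@image_affine_itv_lt0 _ _ _ _ (- c) (-1)); last 2 first.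
  - lra.
  - move=> x; rewrite pt_n pt_nS => /andP[x_gt x_lt].
    by rewrite /Tn tent_midleft; [ring | apply/andP; split; lra].
  rewrite pt1 pt_n pt_nS pt_nS3 (_ : - c * - k + -1 = c * k - 1); last ring.
  by rewrite (_ : - c * - (1/2) + -1 = k); last lra.
rewrite (_ : j = n.+1); last lia.
rewrite (_ : (n.+1 == n) = false); last lia.
rewrite (@image_affine_itv_lt0 _ _ _ _ (- c) (-1)); last 2 first.
- lra.
- move=> x; rewrite pt_nS pt_nS2 => /andP[x_gt x_lt].
  by rewrite /Tn tent_midleft; [ring | apply/andP; split; lra].
rewrite pt1 pt0 pt_nS pt_nS2 (_ : - c * - k + -1 = c * k - 1); last ring.
by rewrite (_ : - c * 0 + -1 = -1); last ring.
Qed.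

Lemma image_Rint j : (j < N)%N ->
  T @` @Defs.Rint R n j = `](pt (img_lo n j)), (pt (img_hi n j))[.
Proof.
move=> ltjN; have [|lt_j] := leqP j n.+1; first exact: image_Rint_left.
set j' := (2 * n + 3 - j)%N; have lej' : (j' <= n.+1)%N by rewrite /j'; lia.
have [lo_le hi_le] := img_bounds (ltac:(lia) : (j' < N)%N).
have := image_itvN (tentN (kappa R n)) (image_Rint_left lej').
rewrite !r_pt -?ptN ?Rint_pt //; [|lia..].
have -> : (N - j'.+1 = j)%N by rewrite /j'; lia.
have -> : (N - j' = j.+1)%N by rewrite /j'; lia.
by rewrite /img_lo /img_hi lej' (_ : (j <= n.+1)%N = false) //; lia.
Qed.

Lemma An_tent_mx : An R n = tent_mx n.
Proof.
apply/matrixP => i j; rewrite !mxE; congr ((nat_of_bool _)%:R).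
have [lo_le hi_le] := img_bounds (ltn_ord j).
rewrite image_Rint // Rint_pt //.
have sub_iff := itv_subset_consecutive pt_step (ltn_ord i) lo_le hi_le.
by apply/idP/idP => [/asboolP/sub_iff | /sub_iff/asboolP].
Qed.

End MarkovPartition.

Theorem lemma6 (R : realType) (n : nat) : (1 <= n)%N ->
  An R n *m (An R n ^+ n.+1 - 2%:R *: An R n ^+ n - 2%:R *: Jn n) = 0.
Proof. by move=> n_gt0; rewrite An_tent_mx //; apply: tent_defect_eq0. Qed.
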